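(* Suppose $a_0,\ldots,a_4\in\mathbb{Z}$ satisfy $\gcd(a_0,\ldots,a_4)=1$ and that $(-3)\Delta(a_0,\ldots,a_4)\neq 0$ is a perfect square in $\mathbb{Q}$. Then (a) $a_0,\ldots,a_4$ all have the same sign; and (b) for every prime number $p\equiv 2\pmod 3$, all the $p$-adic valuations $\nu_p(a_0),\ldots,\nu_p(a_4)$ are even.
   Context: The discriminant is the polynomial $$\Delta(a_0,\ldots,a_4):=\prod_{i_1,\ldots,i_4\in\{0,1\}}\Big(\sqrt{a_1a_2a_3a_4}+(-1)^{i_1}\sqrt{a_0a_2a_3a_4}+(-1)^{i_2}\sqrt{a_0a_1a_3a_4}+(-1)^{i_3}\sqrt{a_0a_1a_2a_4}+(-1)^{i_4}\sqrt{a_0a_1a_2a_3}\Big)\in\mathbb{Q}[a_0,\ldots,a_4]$$ (a symmetric form of degree $32$; it is the discriminant of the cubic surface $a_0X_0^3+\cdots+a_4X_4^3=0$, $X_0+\cdots+X_4=0$). *)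

From HB Require Import structures.
From mathcomp Require Import all_boot all_order all_algebra all_field.
Set Implicit Arguments. Unset Strict Implicit. Unset Printing Implicit Defensive.
Import Order.TTheory GRing.Theory Num.Theory.
Local Open Scope ring_scope.

Definition sgn (b : bool) : algC := (-1) ^+ b.

Definition sq (x : int) : algC := sqrtC (x%:~R).

(* The discriminant Delta(a0,...,a4), defined literally as the product over
   (i1,i2,i3,i4) in {0,1}^4.  The value does not depend on the choice of
   square roots (flipping sqrt(a0a2a3a4),... permutes the factors; flipping
   sqrt(a1a2a3a4) negates all 16 factors). *)
Definition Delta (a0 a1 a2 a3 a4 : int) : algC :=
  \prod_(e : bool * bool * bool * bool)
    (let: (i1, i2, i3, i4) := e in
       sq (a1 * a2 * a3 * a4)
     + sgn i1 * sq (a0 * a2 * a3 * a4)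
     + sgn i2 * sq (a0 * a1 * a3 * a4)
     + sgn i3 * sq (a0 * a1 * a2 * a4)
     + sgn i4 * sq (a0 * a1 * a2 * a3)).

From HB Require Import structures.
From mathcomp Require Import all_boot all_order all_algebra all_field.
From mathcomp Require Import ring zify.
Set Implicit Arguments. Unset Strict Implicit. Unset Printing Implicit Defensive.
Import Order.TTheory GRing.Theory Num.Theory.
Local Open Scope ring_scope.

(** Grouping the sixteen factors of [Delta] by the sign in front of one root
    [s_j = sqrt(x_j)], [1 <= j <= 4], writes [Delta] as a norm [A^2 - B^2 x_0 x_j]
    with [A, B] integers, and [x_0 x_j = a_0 a_j c^2].  Clearing denominators in
    [-3 Delta = q^2] then gives [X^2 + 3 Z^2 = a_0 a_j Y^2] with [Z <> 0], so
    [a_0 a_j > 0] and [a_0 a_j] has even valuation at every prime [p = 2 mod 3]: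
    such a [p > 2] cannot divide [X^2 + 3 Z^2] without dividing [Z], since [-3] is
    not a square mod [p] ([F_p] has no primitive cube root of unity), while
    [X^2 + 3 Z^2] is [4] times an odd number when [X, Z] are odd.  Hence all [a_j]
    have the sign of [a_0], all [nu_p(a_j)] have the parity of [nu_p(a_0)], and
    coprimality forbids them all being odd. *)

Section SignProducts.
Variable R : comNzRingType.
Implicit Types u a b c d w t T : R.

Definition sign_norm w b c d : R :=
  ((w - b - c - d) ^+ 2 - 4%:R * (b * c + c * d + d * b)) ^+ 2 - 64%:R * w * b * c * d.

(** [sign_norm (w + t) b c d = sign_norm_even w (t ^+ 2) b c d
                               + t * sign_norm_odd w (t ^+ 2) b c d]. *)
Definition sign_norm_even w T b c d : R :=
  let s := b + c + d in let m := s ^+ 2 - 4%:R * (b * c + c * d + d * b) in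
  let k := w ^+ 2 + T - 2%:R * s * w + m in
  k ^+ 2 + (2%:R * w - 2%:R * s) ^+ 2 * T - 64%:R * b * c * d * w.

Definition sign_norm_odd w T b c d : R :=
  let s := b + c + d in let m := s ^+ 2 - 4%:R * (b * c + c * d + d * b) in
  let k := w ^+ 2 + T - 2%:R * s * w + m in
  2%:R * k * (2%:R * w - 2%:R * s) - 64%:R * b * c * d.

Definition sign_prod u a b c d : R :=
  \prod_(i : bool) \prod_(j : bool) \prod_(k : bool) \prod_(l : bool)
    (u + (-1) ^+ i * a + (-1) ^+ j * b + (-1) ^+ k * c + (-1) ^+ l * d).

Lemma prod_sign3 u b c d :
  \prod_(j : bool) \prod_(k : bool) \prod_(l : bool)
    (u + (-1) ^+ j * b + (-1) ^+ k * c + (-1) ^+ l * d)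
  = sign_norm (u ^+ 2) (b ^+ 2) (c ^+ 2) (d ^+ 2).
Proof. by do 7 rewrite big_bool /=; rewrite /sign_norm; ring. Qed.

Lemma sign_norm_conj w t b c d :
  sign_norm (w + t) b c d * sign_norm (w - t) b c d
  = sign_norm_even w (t ^+ 2) b c d ^+ 2 - t ^+ 2 * sign_norm_odd w (t ^+ 2) b c d ^+ 2.
Proof. rewrite /sign_norm /sign_norm_even /sign_norm_odd /=; ring. Qed.

Lemma sign_prodC12 u a b c d : sign_prod u a b c d = sign_prod u b a c d.
Proof.
rewrite /sign_prod exchange_big; do 4 (apply: eq_bigr => ? _); ring.
Qed.

Lemma sign_prodC23 u a b c d : sign_prod u a b c d = sign_prod u a c b d.
Proof.
rewrite /sign_prod; apply: eq_bigr => i _; rewrite exchange_big.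
by do 3 (apply: eq_bigr => ? _); ring.
Qed.

Lemma sign_prodC34 u a b c d : sign_prod u a b c d = sign_prod u a b d c.
Proof.
rewrite /sign_prod; do 2 (apply: eq_bigr => ? _); rewrite exchange_big.
by do 2 (apply: eq_bigr => ? _); ring.
Qed.

Lemma sign_prod_norm u a b c d :
  sign_prod u a b c d =
    sign_norm_even (u ^+ 2 + a ^+ 2) (4%:R * u ^+ 2 * a ^+ 2) (b ^+ 2) (c ^+ 2) (d ^+ 2) ^+ 2
    - 4%:R * u ^+ 2 * a ^+ 2
      * sign_norm_odd (u ^+ 2 + a ^+ 2) (4%:R * u ^+ 2 * a ^+ 2) (b ^+ 2) (c ^+ 2) (d ^+ 2) ^+ 2.
Proof.
have -> : 4%:R * u ^+ 2 * a ^+ 2 = (2%:R * u * a) ^+ 2 by ring.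
rewrite -sign_norm_conj /sign_prod big_bool /= !prod_sign3 mulrC.
by congr (sign_norm _ _ _ _ * sign_norm _ _ _ _); ring.
Qed.

End SignProducts.

Lemma Delta_sign_prod a0 a1 a2 a3 a4 :
  Delta a0 a1 a2 a3 a4 =
    sign_prod (sq (a1 * a2 * a3 * a4)) (sq (a0 * a2 * a3 * a4)) (sq (a0 * a1 * a3 * a4))
              (sq (a0 * a1 * a2 * a4)) (sq (a0 * a1 * a2 * a3)).
Proof. by rewrite /sign_prod !pair_big; apply: eq_bigr => -[[[i j] k] l]. Qed.

Lemma DeltaC12 a0 a1 a2 a3 a4 : Delta a0 a1 a2 a3 a4 = Delta a0 a2 a1 a3 a4.
Proof. by rewrite !Delta_sign_prod sign_prodC12; congr sign_prod; congr sq; ring. Qed.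

Lemma DeltaC13 a0 a1 a2 a3 a4 : Delta a0 a1 a2 a3 a4 = Delta a0 a3 a2 a1 a4.
Proof.
rewrite !Delta_sign_prod sign_prodC23 sign_prodC12 sign_prodC23.
by congr sign_prod; congr sq; ring.
Qed.

Lemma DeltaC14 a0 a1 a2 a3 a4 : Delta a0 a1 a2 a3 a4 = Delta a0 a4 a2 a3 a1.
Proof.
rewrite !Delta_sign_prod sign_prodC34 sign_prodC23 sign_prodC12 sign_prodC23 sign_prodC34.
by congr sign_prod; congr sq; ring.
Qed.

Lemma Delta_norm a0 a1 a2 a3 a4 :
  exists A B : int, Delta a0 a1 a2 a3 a4 = (A ^+ 2 - B ^+ 2 * (a0 * a1))%:~R.
Proof.
set x0 := a1 * a2 * a3 * a4; set x1 := a0 * a2 * a3 * a4; set x2 := a0 * a1 * a3 * a4.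
set x3 := a0 * a1 * a2 * a4; set x4 := a0 * a1 * a2 * a3.
exists (sign_norm_even (x0 + x1) (4%:R * x0 * x1) x2 x3 x4).
exists (2 * sign_norm_odd (x0 + x1) (4%:R * x0 * x1) x2 x3 x4 * (a2 * a3 * a4)).
rewrite Delta_sign_prod sign_prod_norm /sq !sqrtCK.
rewrite /sign_norm_even /sign_norm_odd /x0 /x1 /x2 /x3 /x4 /=; ring.
Qed.

Lemma Fp_cube_root1_neq (p : nat) (w : 'F_p) :
  prime p -> (p %% 3 = 2)%N -> w ^+ 2 + w + 1 != 0.
Proof.
move=> pp p3; apply/eqP => hw.
have w3 : w ^+ 3 = 1.
  apply/eqP; rewrite -subr_eq0.
  have -> : w ^+ 3 - 1 = (w - 1) * (w ^+ 2 + w + 1) by ring.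
  by rewrite hw mulr0.
have w2 : w ^+ 2 = w.
  have wp := expf_card w; rewrite card_Fp // in wp.
  have p_eq : (p %/ 3 * 3 + 2)%N = p by rewrite [RHS](divn_eq p 3) p3.
  have := exprD w (p %/ 3 * 3) 2; rewrite p_eq wp mulnC exprM w3 expr1n mul1r.
  by move=> <-.
have : w * (w - 1) = 0 by rewrite mulrBr mulr1 -expr2 w2 subrr.
move/eqP; rewrite mulf_eq0 subr_eq0 => /orP[] /eqP w01.
  by move/eqP: hw; rewrite w01 expr0n /= !add0r oner_eq0.
have : (p %| 3)%N.
  by rewrite (dvdn_pcharf (pchar_Fp pp)) -hw w01; apply/eqP; ring.
move=> p_dvd3; have p_le3 : (p <= 3)%N by apply: dvdn_leq.
have p2 : p = 2 by lia.
by rewrite p2 in p_dvd3.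
Qed.

Lemma dvdn_sqr_add3sqr (p X Z : nat) :
  prime p -> (p %% 3 = 2)%N -> (2 < p)%N -> (p %| X ^ 2 + 3 * Z ^ 2)%N -> (p %| Z)%N.
Proof.
move=> pp p3 p_gt2; have chF := pchar_Fp pp.
rewrite !(dvdn_pcharf chF) natrD natrM !natrX => /eqP e; apply: contraT => z0.
have two0 : (2%:R : 'F_p) != 0.
  by rewrite -(dvdn_pcharf chF); apply/negP => /dvdn_leq; lia.
(* [x / z] is a square root of [-3], so [(x / z - 1) / 2] is a primitive cube root of unity. *)
have := Fp_cube_root1_neq ((X%:R / Z%:R - 1) / 2%:R) pp p3.
rewrite (_ : _ + _ + 1 = (X%:R ^+ 2 + 3%:R * Z%:R ^+ 2) / (2%:R ^+ 2 * Z%:R ^+ 2)).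
  by rewrite e mul0r eqxx.
have four0 : (4%:R : 'F_p) != 0 by rewrite (natrM _ 2 2) mulf_neq0.
by field; rewrite z0 four0 two0.
Qed.

Lemma logn2_sqr_add3sqr (X Z : nat) : odd X -> odd Z -> logn 2 (X ^ 2 + 3 * Z ^ 2)%N = 2.
Proof.
move=> oX oZ.
have [a ->] : exists a, X = a.*2.+1 by exists X./2; rewrite -{1}(odd_double_half X) oX.
have [b ->] : exists b, Z = b.*2.+1 by exists Z./2; rewrite -{1}(odd_double_half Z) oZ.
have -> : (a.*2.+1 ^ 2 + 3 * b.*2.+1 ^ 2 = 2 ^ 2 * (a * a.+1 + 3 * (b * b.+1) + 1))%N.
  by rewrite -!muln2; ring.
rewrite lognM ?addn1 // pfactorK // logn_coprime ?coprime2n //.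
by rewrite /= oddD !oddM /=; case: (odd a); case: (odd b).
Qed.

Lemma logn_sqr_add3sqr_even (p X Z : nat) :
  prime p -> (p %% 3 = 2)%N -> (0 < Z)%N -> ~~ odd (logn p (X ^ 2 + 3 * Z ^ 2)%N).
Proof.
move=> pp p3; elim/ltn_ind: Z X => Z IH X Z_gt0.
have [pN|pN] := boolP (p %| X ^ 2 + 3 * Z ^ 2)%N; last by rewrite lognE (negPf pN) !andbF.
have [pZ|pZ] := boolP (p %| Z)%N.
  have /dvdnP[X1 ->] : (p %| X)%N.
    move: pN; rewrite dvdn_addl; last by rewrite dvdn_mull ?dvdn_exp.
    by rewrite Euclid_dvdX // => /andP[].
  case/dvdnP: pZ Z_gt0 IH => Z1 -> Z_gt0 IH.
  have Z1_gt0 : (0 < Z1)%N by move: Z_gt0; rewrite muln_gt0 => /andP[].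
  have -> : ((X1 * p) ^ 2 + 3 * (Z1 * p) ^ 2 = p ^ 2 * (X1 ^ 2 + 3 * Z1 ^ 2))%N by ring.
  have pos : (0 < X1 ^ 2 + 3 * Z1 ^ 2)%N by apply: ltn_addl; rewrite muln_gt0 expn_gt0 Z1_gt0.
  rewrite lognM ?expn_gt0 ?(prime_gt0 pp) //.
  rewrite (pfactorK 2 pp) oddD /=; apply: IH => //.
  exact: ltn_Pmulr (prime_gt1 pp) Z1_gt0.
have p2 : p = 2.
  apply/eqP; rewrite eqn_leq prime_gt1 // andbT leqNgt.
  by apply: contra pZ => p_gt2; exact: dvdn_sqr_add3sqr pp p3 p_gt2 pN.
subst p; move: pN pZ; rewrite !dvdn2 negbK oddD oddM !oddX /= => oXZ oZ.
by rewrite logn2_sqr_add3sqr //; move: oXZ; rewrite oZ; case: (odd X).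
Qed.

Lemma sqr_add3sqr_eq_mul_sqr (x z y d : int) :
  z != 0 -> x ^+ 2 + 3 * z ^+ 2 = d * y ^+ 2 ->
  0 < d /\ forall p, prime p -> (p %% 3 = 2)%N -> ~~ odd (logn p `|d|).
Proof.
move=> z0 e.
have dy_gt0 : 0 < d * y ^+ 2.
  by rewrite -e ltr_wpDl ?sqr_ge0 // mulr_gt0 // exprn_even_gt0.
have d_gt0 : 0 < d.
  move: dy_gt0; apply: contraTT; rewrite -!leNgt => d_le0.
  by rewrite mulr_le0_ge0 ?sqr_ge0.
have y0 : y != 0 by apply: contraTneq dy_gt0 => ->; rewrite expr0n mulr0 ltxx.
split=> // p pp p3.
have eN : (`|x| ^ 2 + 3 * `|z| ^ 2)%N = (`|d| * `|y| ^ 2)%N.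
  apply/eqP; rewrite -eqz_nat PoszD !PoszM !abszE -!expr2.
  by rewrite !real_normK ?num_real // (gtr0_norm d_gt0) e.
have z_gt0 : (0 < `|z|)%N by rewrite absz_gt0.
have := logn_sqr_add3sqr_even `|x| pp p3 z_gt0.
rewrite eN lognM ?absz_gt0 ?expn_gt0 ?absz_gt0 ?(gt_eqF d_gt0) ?y0 // lognX.
by rewrite oddD oddM /= addbF.
Qed.

Lemma rat_sqr_sqr_add3sqr (A B d : int) (q : rat) :
  q != 0 -> q ^+ 2 = ((-3) * (A ^+ 2 - B ^+ 2 * d))%:~R ->
  exists x z y : int, z != 0 /\ x ^+ 2 + 3 * z ^+ 2 = d * y ^+ 2.
Proof.
move=> q0 hq; exists (3 * A * denq q), (numq q), (3 * B * denq q).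
split; first by rewrite numq_eq0.
have num2 : numq q ^+ 2 = (-3) * (A ^+ 2 - B ^+ 2 * d) * denq q ^+ 2.
  apply: (@intr_inj rat); rewrite -[q in LHS]divq_num_den in hq.
  have den0 : (denq q)%:~R != 0 :> rat by rewrite intr_eq0 denq_neq0.
  by rewrite rmorphXn rmorphM /= -hq; field.
by rewrite num2; ring.
Qed.

Lemma neg3_sqr_pos_logn_even (D : algC) (A B d : int) :
  D = (A ^+ 2 - B ^+ 2 * d)%:~R -> (-3) * D != 0 ->
  (exists q : rat, (-3) * D = ratr q ^+ 2) ->
  0 < d /\ forall p, prime p -> (p %% 3 = 2)%N -> ~~ odd (logn p `|d|).
Proof.
move=> -> D0 [q hq].
have q0 : q != 0 by apply: contraNneq D0 => q0; rewrite hq q0 rmorph0 expr0n.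
have /(rat_sqr_sqr_add3sqr q0) [x [z [y [z0 e]]]] : q ^+ 2 = ((-3) * (A ^+ 2 - B ^+ 2 * d))%:~R.
  by apply: (fmorph_inj (@ratr algC)); rewrite rmorphXn rmorph_int -hq; ring.
exact: sqr_add3sqr_eq_mul_sqr z0 e.
Qed.

Lemma mul_gt0_same_sign (R : realDomainType) (a0 a1 a2 a3 a4 : R) :
  0 < a0 * a1 -> 0 < a0 * a2 -> 0 < a0 * a3 -> 0 < a0 * a4 ->
  ((0 < a0) /\ (0 < a1) /\ (0 < a2) /\ (0 < a3) /\ (0 < a4)) \/
  ((a0 < 0) /\ (a1 < 0) /\ (a2 < 0) /\ (a3 < 0) /\ (a4 < 0)).
Proof.
case: (ltrgtP a0 0) => [a0_lt0|a0_gt0|->]; last by rewrite mul0r ltxx.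
  by rewrite !nmulr_rgt0 // => *; right.
by rewrite !pmulr_rgt0 // => *; left.
Qed.

Lemma logn_even_of_coprime (p n0 n1 n2 n3 n4 : nat) : prime p ->
  gcdn n0 (gcdn n1 (gcdn n2 (gcdn n3 n4))) = 1%N ->
  (0 < n0 * n1)%N -> (0 < n0 * n2)%N -> (0 < n0 * n3)%N -> (0 < n0 * n4)%N ->
  ~~ odd (logn p (n0 * n1)) -> ~~ odd (logn p (n0 * n2)) ->
  ~~ odd (logn p (n0 * n3)) -> ~~ odd (logn p (n0 * n4)) ->
  [/\ ~~ odd (logn p n0), ~~ odd (logn p n1), ~~ odd (logn p n2),
      ~~ odd (logn p n3) & ~~ odd (logn p n4)].
Proof.
move=> pp g1; rewrite !muln_gt0.
move=> /andP[n0_gt0 n1_gt0] /andP[_ n2_gt0] /andP[_ n3_gt0] /andP[_ n4_gt0].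
rewrite !lognM // !oddD.
have [o0|_] := boolP (odd (logn p n0)); last by move=> /= -> -> -> ->.
rewrite /= !negbK => o1 o2 o3 o4.
have dvd_odd n : odd (logn p n) -> (p %| n)%N.
  by move/odd_gt0; rewrite logn_gt0 mem_primes => /and3P[].
have : (p %| gcdn n0 (gcdn n1 (gcdn n2 (gcdn n3 n4))))%N by rewrite !dvdn_gcd !dvd_odd.
by rewrite g1 dvdn1 => /eqP p1; rewrite p1 in pp.
Qed.

Unset Implicit Arguments.

Theorem mainTheorem5 (a0 a1 a2 a3 a4 : int) :
  gcdz a0 (gcdz a1 (gcdz a2 (gcdz a3 a4))) = 1 ->
  (-3) * Delta a0 a1 a2 a3 a4 != 0 ->
  (exists q : rat, (-3) * Delta a0 a1 a2 a3 a4 = (ratr q) ^+ 2) ->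
  (((0 < a0) /\ (0 < a1) /\ (0 < a2) /\ (0 < a3) /\ (0 < a4)) \/
   ((a0 < 0) /\ (a1 < 0) /\ (a2 < 0) /\ (a3 < 0) /\ (a4 < 0))) /\
  (forall p : nat, prime p -> (p %% 3 = 2)%N ->
     [/\ ~~ odd (logn p `|a0|), ~~ odd (logn p `|a1|), ~~ odd (logn p `|a2|),
         ~~ odd (logn p `|a3|) & ~~ odd (logn p `|a4|)]).
Proof.
move=> coprime_a D0 Dsqr.
have [? [? /neg3_sqr_pos_logn_even/(_ D0 Dsqr)[pos1 ev1]]] := Delta_norm a0 a1 a2 a3 a4.
have [? [?]] := Delta_norm a0 a2 a1 a3 a4.
rewrite -DeltaC12 => /neg3_sqr_pos_logn_even/(_ D0 Dsqr)[pos2 ev2].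
have [? [?]] := Delta_norm a0 a3 a2 a1 a4.
rewrite -DeltaC13 => /neg3_sqr_pos_logn_even/(_ D0 Dsqr)[pos3 ev3].
have [? [?]] := Delta_norm a0 a4 a2 a3 a1.
rewrite -DeltaC14 => /neg3_sqr_pos_logn_even/(_ D0 Dsqr)[pos4 ev4].
split; first exact: mul_gt0_same_sign.
move=> p pp p3.
have abs_gt0 aj : 0 < a0 * aj -> (0 < `|a0| * `|aj|)%N.
  by move=> h; rewrite -abszM absz_gt0 lt0r_neq0.
apply: logn_even_of_coprime (abs_gt0 _ pos1) (abs_gt0 _ pos2) (abs_gt0 _ pos3)
  (abs_gt0 _ pos4) _ _ _ _ => //; rewrite -?abszM.
- by case: coprime_a.
- exact: ev1.
- exact: ev2.
- exact: ev3.
- exact: ev4.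
Qed.
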